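(* Let $\theta=(\{X_s\}_{s\in S},\{\theta_s\}_{s\in S})$ and $\gamma=(\{Y_t\}_{t\in T},\{\gamma_t\}_{t\in T})$ be almost ample topological partial actions of inverse semigroups $S$ and $T$ on spaces $X$ and $Y$, and suppose the groupoids of germs $S\ltimes X$ and $T\ltimes Y$ are isomorphic as topological groupoids. Then $\theta$ and $\gamma$ are continuously orbit equivalent.
   Context: A topological partial action $\theta$ of an inverse semigroup $S$ on $X$ consists of open $X_s\subseteq X$ and homeomorphisms $\theta_s:X_{s^*}\to X_s$ with $s\mapsto\theta_s$ a partial homomorphism into the inverse semigroup of partial bijections of $X$ (i.e. $\theta_{s^*}=\theta_s^{-1}$, $\theta_s\theta_t\le\theta_{st}$, $s\le t\Rightarrow\theta_s\le\theta_t$, where $s\le t$ iff $s=ts^*s$) and $X=\bigcup_{e\in E(S)}X_e$, $E(S)$ the idempotents. A Hausdorff space is ultraparacompact if every open cover has a refinement consisting of pairwise disjoint clopen sets. $\theta$ is almost ample if $X$ is locally compact Hausdorff and every $X_s$ ($s\in S$) is ultraparacompact. Groupoid of germs $S\ltimes X$: germs $[s,x]$ of pairs $(s,x)$ with $x\in X_{s^*}$, where $(s,x)\sim(t,y)$ iff $x=y$ and some $u\le s,t$ has $x\in X_{u^*}$; source $x$, range $\theta_s(x)$, product $[s,x][t,y]=[st,y]$ when $x=\theta_t(y)$, inverse $[s^*,\theta_s(x)]$, unit space identified with $X$; topology with basis $[s,U]=\{[s,x]:x\in U\}$, $U\subseteq X_{s^*}$ open. Continuous orbit equivalence: writing $S_x=\{s:x\in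 X_{s^*}\}$ and $S*X=\{(s,x):x\in X_{s^*}\}$ (with $S,T$ discrete), there exist a homeomorphism $\varphi:X\to Y$ and continuous $a:S*X\to T$, $b:T*Y\to S$ with $a(s,x)\in T_{\varphi(x)}$, $b(t,y)\in S_{\varphi^{-1}(y)}$, $\varphi(\theta_s(x))=\gamma_{a(s,x)}(\varphi(x))$ and $\varphi^{-1}(\gamma_t(y))=\theta_{b(t,y)}(\varphi^{-1}(y))$ for all $x$, $s\in S_x$, $y$, $t\in T_y$. *)

From HB Require Import structures.
From mathcomp Require Import all_boot all_order.
From mathcomp Require Import all_classical all_reals all_analysis.
Set Implicit Arguments.
Unset Strict Implicit.
Unset Printing Implicit Defensive.
Local Open Scope classical_set_scope.

Definition inverse_semigroup (S : Type) (mul : S -> S -> S) (star : S -> S) :=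
  [/\ (forall a b c, mul a (mul b c) = mul (mul a b) c),
      (forall s, mul (mul s (star s)) s = s),
      (forall s, mul (mul (star s) s) (star s) = star s) &
      (forall s t, mul (mul s t) s = s -> mul (mul t s) t = t -> t = star s)].

Definition idempotent_el (S : Type) (mul : S -> S -> S) (e : S) := mul e e = e.

Definition isg_le (S : Type) (mul : S -> S -> S) (star : S -> S) (s t : S) :=
  s = mul t (mul (star s) s).

(* Xd s is X_s; th s is theta_s, a homeomorphism X_{s^*} -> X_s (values of
   th s outside X_{s^*} are irrelevant). *)
Definition top_partial_action (S : Type) (mul : S -> S -> S) (star : S -> S)
  (X : topologicalType) (Xd : S -> set X) (th : S -> X -> X) :=
  (forall s, open (Xd s)) /\
      (forall s, forall x, Xd (star s) x -> Xd s (th s x)) /\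
      (forall s, {within Xd (star s), continuous (th s)}) /\
      (forall s x, Xd (star s) x -> th (star s) (th s x) = x) /\
      (forall s t x, Xd (star t) x -> Xd (star s) (th t x) ->
          Xd (star (mul s t)) x /\ th (mul s t) x = th s (th t x)) /\
      (forall s t, isg_le mul star s t ->
          forall x, Xd (star s) x -> Xd (star t) x /\ th s x = th t x) /\
      (forall x, exists e, idempotent_el mul e /\ Xd e x).

Definition rel_open (X : topologicalType) (A V : set X) :=
  exists O : set X, open O /\ V = A `&` O.
Definition rel_closed (X : topologicalType) (A V : set X) :=
  exists C : set X, closed C /\ V = A `&` C.

Definition ultraparacompact (X : topologicalType) (A : set X) :=
  forall Cov : set (set X),
    (forall V, Cov V -> rel_open A V) ->
    \bigcup_(V in Cov) V = A ->
    exists R : set (set X),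
      [/\ (forall W, R W -> rel_open A W /\ rel_closed A W),
          (forall W, R W -> exists2 V, Cov V & W `<=` V),
          (forall W W', R W -> R W' -> W <> W' -> W `&` W' = set0) &
          \bigcup_(W in R) W = A].

Definition almost_ample (S : Type) (mul : S -> S -> S) (star : S -> S)
  (X : topologicalType) (Xd : S -> set X) (th : S -> X -> X) :=
  [/\ hausdorff_space X, locally_compact [set: X] &
      forall s, ultraparacompact (Xd s)].

Definition germ_rel (S : Type) (mul : S -> S -> S) (star : S -> S)
  (X : Type) (Xd : S -> set X) (p q : S * X) :=
  p.2 = q.2 /\ exists u, [/\ isg_le mul star u p.1, isg_le mul star u q.1 &
                            Xd (star u) p.2].

Definition germ (S : Type) (mul : S -> S -> S) (star : S -> S)
  (X : Type) (Xd : S -> set X) (s : S) (x : X) : set (S * X) :=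
  [set p | germ_rel mul star Xd p (s, x)].

Definition germs (S : Type) (mul : S -> S -> S) (star : S -> S)
  (X : Type) (Xd : S -> set X) : set (set (S * X)) :=
  [set g | exists s x, Xd (star s) x /\ g = germ mul star Xd s x].

(* product: gmul g h k iff g h is defined and equals k; i.e.
   g = [s,x], h = [t,y], x = theta_t(y), k = [st,y] *)
Definition germ_mul (S : Type) (mul : S -> S -> S) (star : S -> S)
  (X : Type) (Xd : S -> set X) (th : S -> X -> X)
  (g h k : set (S * X)) :=
  exists s x t y, [/\ Xd (star s) x, Xd (star t) y & x = th t y] /\
     [/\ g = germ mul star Xd s x, h = germ mul star Xd t y &
     k = germ mul star Xd (mul s t) y].

Definition germ_basic (S : Type) (mul : S -> S -> S) (star : S -> S)
  (X : Type) (Xd : S -> set X) (s : S) (U : set X) : set (set (S * X)) :=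
  [set g | exists2 x, U x & g = germ mul star Xd s x].

Definition germ_open (S : Type) (mul : S -> S -> S) (star : S -> S)
  (X : topologicalType) (Xd : S -> set X) (W : set (set (S * X))) :=
  W `<=` germs mul star Xd /\
  forall g, W g -> exists s (U : set X),
    [/\ open U, U `<=` Xd (star s), germ_basic mul star Xd s U g &
        germ_basic mul star Xd s U `<=` W].

Definition germ_groupoid_iso
  (S : Type) (mulS : S -> S -> S) (starS : S -> S)
  (X : topologicalType) (Xd : S -> set X) (th : S -> X -> X)
  (T : Type) (mulT : T -> T -> T) (starT : T -> T)
  (Y : topologicalType) (Yd : T -> set Y) (ga : T -> Y -> Y)
  (Phi : set (S * X) -> set (T * Y)) (Psi : set (T * Y) -> set (S * X)) :=
  let G := germs mulS starS Xd in let H := germs mulT starT Yd in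
  (forall g, G g -> H (Phi g)) /\
      (forall h, H h -> G (Psi h)) /\
      (forall g, G g -> Psi (Phi g) = g) /\
      (forall h, H h -> Phi (Psi h) = h) /\
      (forall g1 g2 g3, G g1 -> G g2 -> G g3 ->
         germ_mul mulS starS Xd th g1 g2 g3 ->
         germ_mul mulT starT Yd ga (Phi g1) (Phi g2) (Phi g3)) /\
      (forall h1 h2 h3, H h1 -> H h2 -> H h3 ->
         germ_mul mulT starT Yd ga h1 h2 h3 ->
         germ_mul mulS starS Xd th (Psi h1) (Psi h2) (Psi h3)) /\
      (forall W, germ_open mulT starT Yd W ->
         germ_open mulS starS Xd [set g | G g /\ W (Phi g)]) /\
      (forall W, germ_open mulS starS Xd W ->
         germ_open mulT starT Yd [set h | H h /\ W (Psi h)]).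

Definition germ_groupoids_isomorphic
  (S : Type) (mulS : S -> S -> S) (starS : S -> S)
  (X : topologicalType) (Xd : S -> set X) (th : S -> X -> X)
  (T : Type) (mulT : T -> T -> T) (starT : T -> T)
  (Y : topologicalType) (Yd : T -> set Y) (ga : T -> Y -> Y) :=
  exists Phi Psi,
    germ_groupoid_iso mulS starS Xd th mulT starT Yd ga Phi Psi.

(* a map c : S * X -> T on S*X = {(s,x) | x in X_{s^*}} (S, T discrete) is
   continuous iff for each s it is locally constant in x on X_{s^*} *)
Definition cont_on_SX (S : Type) (star : S -> S) (X : topologicalType)
  (Xd : S -> set X) (T : Type) (c : S -> X -> T) :=
  forall s x, Xd (star s) x ->
    exists U : set X, [/\ open U, U x &
      forall y, U y -> Xd (star s) y -> c s y = c s x].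

Definition cont_orbit_equiv
  (S : Type) (mulS : S -> S -> S) (starS : S -> S)
  (X : topologicalType) (Xd : S -> set X) (th : S -> X -> X)
  (T : Type) (mulT : T -> T -> T) (starT : T -> T)
  (Y : topologicalType) (Yd : T -> set Y) (ga : T -> Y -> Y) :=
  exists (phi : X -> Y) (phiinv : Y -> X) (a : S -> X -> T) (b : T -> Y -> S),
    [/\
        cancel phi phiinv /\ cancel phiinv phi,
        continuous phi /\ continuous phiinv,
        cont_on_SX starS Xd a /\ cont_on_SX starT Yd b,
        (forall s x, Xd (starS s) x ->
           Yd (starT (a s x)) (phi x) /\
           phi (th s x) = ga (a s x) (phi x)) &
        (forall t y, Yd (starT t) y ->
           Xd (starS (b t y)) (phiinv y) /\
           phiinv (ga t y) = th (b t y) (phiinv y))].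

From mathcomp Require Import all_boot all_order.
From mathcomp Require Import all_classical all_reals all_analysis.
Local Open Scope classical_set_scope.
Set Implicit Arguments.
Unset Strict Implicit.

(* An isomorphism Phi of the groupoids of germs maps unit germs [e,x] to unit
   germs, which defines a map phi : X -> Y on unit spaces; compatibility with
   products shows that Phi [s,x] = [t, phi x] with ga t (phi x) = phi (th s x)
   for some t, and this t is a candidate value for the cocycle a(s,x).
   Continuity of Phi and of its inverse makes phi a homeomorphism and lets the
   same t serve on a neighbourhood of x in X_{s^*}; ultraparacompactness of
   X_{s^*} then glues these local choices, along a partition into disjoint
   clopen sets, into a locally constant a.  The cocycle b comes from Phi^-1. *)

Lemma ultraparacompact_locally_constant_choice (X : topologicalType) (T : Type)
    (t0 : T) (A : set X) (P : X -> T -> Prop) :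
  ultraparacompact A ->
  (forall x, A x -> exists Ob, [/\ open Ob, Ob x &
     exists t, forall z, A z -> Ob z -> P z t]) ->
  exists f : X -> T,
    (forall x, A x -> exists U, [/\ open U, U x &
       forall y, U y -> A y -> f y = f x]) /\
    (forall x, A x -> P x (f x)).
Proof.
move=> upA locP.
pose Cov := [set V : set X | exists t (Ob : set X),
  [/\ open Ob, V = A `&` Ob & forall z, V z -> P z t]].
have Cov_open V : Cov V -> rel_open A V by move=> [t [Ob [oO -> _]]]; exists Ob.
have Cov_cover : \bigcup_(V in Cov) V = A.
  apply/seteqP; split=> [z [V [t [Ob [_ -> _]]]] [Az _] //|x Ax].
  have [Ob [oO Ox [t Pt]]] := locP x Ax.
  exists (A `&` Ob) => //; exists t, Ob; split=> // z [Az Obz]; exact: Pt.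
have [R [R_clopen R_refines R_disj R_cover]] := upA Cov Cov_open Cov_cover.
have /choice[block blockP] : forall x, exists W : set X, A x -> R W /\ W x.
  move=> x; have [Ax|nAx] := pselect (A x); last by exists set0.
  have [W RW Wx] : (\bigcup_(V in R) V) x by rewrite R_cover.
  by exists W.
have /choice[val valP] : forall W : set X,
    exists t, R W -> forall z, W z -> P z t.
  move=> W; have [RW|nRW] := pselect (R W); last by exists t0.
  have [V [t [Ob [_ _ PV]]] WV] := R_refines W RW.
  by exists t => _ z Wz; apply/PV/WV.
exists (fun x => val (block x)); split=> [x Ax|x Ax]; last first.
  by have [RW Wx] := blockP x Ax; exact: valP.
have [RW Wx] := blockP x Ax.
have [[Ob [oO EW]] _] := R_clopen _ RW.
exists Ob; split=> [//||y Oby Ay]; first by move: Wx; rewrite EW => -[].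
have [RWy Wyy] := blockP y Ay.
have [-> //|neq] := pselect (block y = block x).
have Wy : block x y by rewrite EW.
by have := R_disj _ _ RWy RW neq; move/seteqP => [/(_ y (conj Wyy Wy))].
Qed.

Section InverseSemigroup.
Variables (S : Type) (mul : S -> S -> S) (star : S -> S).
Hypothesis iS : inverse_semigroup mul star.

Lemma star_idem e : idempotent_el mul e -> star e = e.
Proof.
by case: iS => _ _ _ uniq_inv ide; symmetry; apply: uniq_inv; rewrite !ide.
Qed.

Lemma starK : involutive star.
Proof. by case: iS => _ inv_l inv_r uniq_inv s; symmetry; apply: uniq_inv. Qed.

Lemma isg_le_refl s : isg_le mul star s s.
Proof. by case: iS => mulA inv_l _ _; rewrite /isg_le mulA inv_l. Qed.

End InverseSemigroup.

Section PartialAction.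
Variables (S : Type) (mul : S -> S -> S) (star : S -> S).
Variables (X : topologicalType) (Xd : S -> set X) (th : S -> X -> X).
Hypotheses (iS : inverse_semigroup mul star)
  (tS : top_partial_action mul star Xd th).

Local Notation germ := (germ mul star Xd).
Local Notation germs := (germs mul star Xd).
Local Notation germ_mul := (germ_mul mul star Xd th).

Lemma pa_open s : open (Xd s).
Proof. by case: tS. Qed.

Lemma pa_mapsto s x : Xd (star s) x -> Xd s (th s x).
Proof. by case: tS => _ [mapsto _]; exact: mapsto. Qed.

Lemma pa_inv s x : Xd (star s) x -> th (star s) (th s x) = x.
Proof. by case: tS => _ [_ [_ [inv _]]]; exact: inv. Qed.

Lemma pa_comp s t x : Xd (star t) x -> Xd (star s) (th t x) ->
  Xd (star (mul s t)) x /\ th (mul s t) x = th s (th t x).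
Proof. by case: tS => _ [_ [_ [_ [comp _]]]]; exact: comp. Qed.

Lemma pa_mono s t x : isg_le mul star s t -> Xd (star s) x ->
  Xd (star t) x /\ th s x = th t x.
Proof. by case: tS => _ [_ [_ [_ [_ [mono _]]]]] st; exact: mono. Qed.

Lemma pa_cover x : exists e, idempotent_el mul e /\ Xd (star e) x.
Proof.
case: tS => _ [_ [_ [_ [_ [_ cover]]]]].
by have [e [ide xe]] := cover x; exists e; rewrite (star_idem iS).
Qed.

Lemma act_idem e x : idempotent_el mul e -> Xd (star e) x -> th e x = x.
Proof.
move=> ide xe; have exe : Xd (star e) (th e x).
  by rewrite (star_idem iS ide); exact: pa_mapsto.
have := (pa_comp xe exe).2; rewrite ide => th_th.
by rewrite -[in RHS](pa_inv xe) (star_idem iS ide).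
Qed.

Lemma germ_self s x : Xd (star s) x -> germ s x (s, x).
Proof. by move=> xs; split=> //; exists s; split=> //; exact: isg_le_refl. Qed.

Lemma germs_germ s x : Xd (star s) x -> germs (germ s x).
Proof. by move=> xs; exists s, x. Qed.

Lemma germ_eq_src s x t y : Xd (star s) x -> germ s x = germ t y -> x = y.
Proof. by move=> xs E; have := germ_self xs; rewrite E => -[]. Qed.

Lemma germ_eq_act s t x : Xd (star s) x -> germ s x = germ t x ->
  th s x = th t x.
Proof.
move=> xs E; have := germ_self xs; rewrite E => -[_ [u [us ut xu]]].
by rewrite -(pa_mono us xu).2 (pa_mono ut xu).2.
Qed.

Lemma germ_mul_germs s t y : Xd (star t) y -> Xd (star s) (th t y) ->
  germ_mul (germ s (th t y)) (germ t y) (germ (mul s t) y).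
Proof. by move=> yt tys; exists s, (th t y), t, y. Qed.

Lemma germ_mul_endpoints g1 g2 g3 s1 x1 s2 x2 s3 x3 :
  germ_mul g1 g2 g3 ->
  Xd (star s1) x1 -> g1 = germ s1 x1 ->
  Xd (star s2) x2 -> g2 = germ s2 x2 ->
  Xd (star s3) x3 -> g3 = germ s3 x3 ->
  x1 = th s2 x2 /\ x3 = x2.
Proof.
move=> [s [x [t [y [[xs yt ->] [E1 E2 E3]]]]]] x1s1 E1' x2s2 E2' x3s3 E3'.
rewrite E1' in E1; rewrite E2' in E2; rewrite E3' in E3.
have -> := germ_eq_src x1s1 E1; have -> := germ_eq_src x3s3 E3.
have x2y := germ_eq_src x2s2 E2; subst x2.
by rewrite (germ_eq_act x2s2 E2).
Qed.

Lemma germ_basic_open s U : open U -> U `<=` Xd (star s) ->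
  germ_open mul star Xd (germ_basic mul star Xd s U).
Proof.
move=> oU sU; split=> [g [x Ux ->]|g Ug]; first exact/germs_germ/sU.
by exists s, U; split.
Qed.

End PartialAction.

Arguments germs_germ {S mul star X Xd s x}.
Arguments germ_mul_germs {S mul star X Xd th s t y}.
Arguments germ_basic_open {S mul star X Xd s U}.

Section GermMap.
Variables (S : Type) (mulS : S -> S -> S) (starS : S -> S).
Variables (X : topologicalType) (Xd : S -> set X) (th : S -> X -> X).
Variables (T : Type) (mulT : T -> T -> T) (starT : T -> T).
Variables (Y : topologicalType) (Yd : T -> set Y) (ga : T -> Y -> Y).
Hypotheses (iS : inverse_semigroup mulS starS)
  (iT : inverse_semigroup mulT starT)
  (tS : top_partial_action mulS starS Xd th)
  (tT : top_partial_action mulT starT Yd ga).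

Local Notation germS := (germ mulS starS Xd).
Local Notation germT := (germ mulT starT Yd).
Local Notation germsS := (germs mulS starS Xd).
Local Notation germsT := (germs mulT starT Yd).

Variable Phi : set (S * X) -> set (T * Y).

Definition germ_map_over (phi : X -> Y) :=
  forall s x, Xd (starS s) x -> exists t, [/\ Yd (starT t) (phi x),
    Phi (germS s x) = germT t (phi x) & ga t (phi x) = phi (th s x)].

Section Homomorphism.
Hypothesis Phi_germs : forall g, germsS g -> germsT (Phi g).
Hypothesis Phi_mul : forall g1 g2 g3, germsS g1 -> germsS g2 -> germsS g3 ->
  germ_mul mulS starS Xd th g1 g2 g3 ->
  germ_mul mulT starT Yd ga (Phi g1) (Phi g2) (Phi g3).

(* Apply Phi to [s,x][e,x] = [se,x] and to [e,x][e,x] = [e,x]: the first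
   shows that the source of Phi [s,x] is the range of Phi [e,x], the second
   that this range is the source of Phi [e,x]. *)
Lemma germ_hom_src_idem s e x t y t0 y0 :
  idempotent_el mulS e -> Xd (starS e) x -> Xd (starS s) x ->
  Yd (starT t) y -> Phi (germS s x) = germT t y ->
  Yd (starT t0) y0 -> Phi (germS e x) = germT t0 y0 -> y = y0.
Proof.
move=> ide xe xs yt E y0t0 E0.
have ex := act_idem iS tS ide xe.
have xse : Xd (starS (mulS s e)) x by apply: (pa_comp tS xe _).1; rewrite ex.
have [t1 [y1 [y1t1 E1]]] := Phi_germs (germs_germ xse).
have se_mul : germ_mul mulS starS Xd th
    (germS s x) (germS e x) (germS (mulS s e) x).
  by rewrite -{1}ex; apply: germ_mul_germs; rewrite ?ex.
have ee_mul : germ_mul mulS starS Xd th (germS e x) (germS e x) (germS e x).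
  by rewrite -{3}ide -{1}ex; apply: germ_mul_germs; rewrite ?ex.
have [-> _] := germ_mul_endpoints iT tT
  (Phi_mul (germs_germ xs) (germs_germ xe) (germs_germ xse) se_mul)
  yt E y0t0 E0 y1t1 E1.
by have [<- _] := germ_mul_endpoints iT tT
  (Phi_mul (germs_germ xe) (germs_germ xe) (germs_germ xe) ee_mul)
  y0t0 E0 y0t0 E0 y0t0 E0.
Qed.

Lemma exists_germ_map_over : exists phi, germ_map_over phi.
Proof.
have /choice[phi phiP] : forall x, exists y, exists e t,
    [/\ idempotent_el mulS e, Xd (starS e) x, Yd (starT t) y &
         Phi (germS e x) = germT t y].
  move=> x; have [e [ide xe]] := pa_cover iS tS x.
  have [t [y [yt E]]] := Phi_germs (germs_germ xe).
  by exists y, e, t.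
have src s x t y : Xd (starS s) x -> Yd (starT t) y ->
    Phi (germS s x) = germT t y -> y = phi x.
  move=> xs yt E; have [e [t0 [ide xe y0t0 E0]]] := phiP x.
  exact: germ_hom_src_idem xe xs yt E y0t0 E0.
exists phi => s x xs.
have [t [y [yt E]]] := Phi_germs (germs_germ xs).
have y_phi := src _ _ _ _ xs yt E; subst y.
exists t; split=> //.
have xs' : Xd (starS (starS s)) (th s x).
  by rewrite (starK iS); exact: (pa_mapsto tS xs).
have xss := (pa_comp tS xs xs').1.
have [t1 [y1 [y1t1 E1]]] := Phi_germs (germs_germ xs').
have [t2 [y2 [y2t2 E2]]] := Phi_germs (germs_germ xss).
have [<- _] := germ_mul_endpoints iT tT (Phi_mul (germs_germ xs')
  (germs_germ xs) (germs_germ xss) (germ_mul_germs xs xs'))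
  y1t1 E1 yt E y2t2 E2.
exact: src xs' y1t1 E1.
Qed.

End Homomorphism.

Section Continuity.
Hypothesis Phi_cont : forall W, germ_open mulT starT Yd W ->
  germ_open mulS starS Xd [set g | germsS g /\ W (Phi g)].
Variable phi : X -> Y.
Hypothesis phi_over : germ_map_over phi.

Lemma germ_map_over_basic_nbhd s x t V :
  Xd (starS s) x -> open V -> V `<=` Yd (starT t) -> V (phi x) ->
  Phi (germS s x) = germT t (phi x) ->
  exists s' U, [/\ open U, U x, U `<=` Xd (starS s'), germS s' x = germS s x &
    forall z, U z -> V (phi z) /\ Phi (germS s' z) = germT t (phi z)].
Proof.
move=> xs oV sV Vx E.
have [_ PhiW_open] := Phi_cont (germ_basic_open oV sV).
have [|s' [U [oU sU [x' Ux' Ex'] sub]]] := PhiW_open (germS s x).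
  by split; [exact: germs_germ | exists (phi x)].
have x'x := germ_eq_src iS xs Ex'; subst x'.
exists s', U; split=> // z Uz.
have [_ [y Vy E']] := sub _ (ex_intro2 _ _ z Uz erefl).
have [t' [zt' E'' _]] := phi_over (sU z Uz).
by have yz := germ_eq_src iT zt' (etrans (esym E'') E'); subst y.
Qed.

Lemma germ_map_over_continuous : continuous phi.
Proof.
apply/continuousP => B oB; rewrite openE => x Bx.
have [e [_ xe]] := pa_cover iS tS x.
have [t [xt E _]] := phi_over xe.
have [s' [U [oU Ux _ _ UB]]] := germ_map_over_basic_nbhd xe
  (openI oB (pa_open tT (starT t))) (@subIsetr _ _ _) (conj Bx xt) E.
rewrite /interior; apply: (@filterS _ _ _ U); last exact: open_nbhs_nbhs.
by move=> z /UB[[]].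
Qed.

Lemma germ_map_over_cocycle_local s x : Xd (starS s) x ->
  exists Ob, [/\ open Ob, Ob x & exists t, forall z, Xd (starS s) z -> Ob z ->
    Yd (starT t) (phi z) /\ phi (th s z) = ga t (phi z)].
Proof.
move=> xs; have [t [xt E _]] := phi_over xs.
have [s' [U [oU Ux sU Es' UV]]] := germ_map_over_basic_nbhd xs
  (pa_open tT (starT t)) (@subset_refl _ _) xt E.
have := germ_self iS xs; rewrite -Es' => -[_ [u [us us' xu]]].
exists (U `&` Xd (starS u)); split; [exact: openI oU (pa_open tS _) | by [] |].
exists t => z zs [Uz zu]; have [zt E'] := UV z Uz.
have [t' [zt' E'' ga_th]] := phi_over (sU z Uz).
split=> //; rewrite -(pa_mono tS us zu).2 (pa_mono tS us' zu).2 -ga_th.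
exact: (germ_eq_act iT tT zt' (etrans (esym E'') E')).
Qed.

Lemma exists_germ_map_over_cocycle : (forall s, ultraparacompact (Xd s)) ->
  exists a : S -> X -> T, cont_on_SX starS Xd a /\
    forall s x, Xd (starS s) x ->
      Yd (starT (a s x)) (phi x) /\ phi (th s x) = ga (a s x) (phi x).
Proof.
move=> upX; have [[x0]|noX] := pselect (inhabited X); last first.
  have X0 (x : X) : False by apply/noX/inhabits.
  by exists (fun _ x => False_rect T (X0 x)); split=> s x; case: (X0 x).
have [e [_ x0e]] := pa_cover iS tS x0.
have [t0 _] := phi_over x0e.
have /choice[a aP] s : exists a_s : X -> T,
    (forall x, Xd (starS s) x -> exists U, [/\ open U, U x &
       forall y, U y -> Xd (starS s) y -> a_s y = a_s x]) /\
    (forall x, Xd (starS s) x ->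
       Yd (starT (a_s x)) (phi x) /\ phi (th s x) = ga (a_s x) (phi x)).
  apply: (ultraparacompact_locally_constant_choice t0
    (P := fun z t => Yd (starT t) (phi z) /\ phi (th s z) = ga t (phi z))
    (upX _)).
  exact: germ_map_over_cocycle_local.
by exists a; split=> s; [exact: (aP s).1 | exact: (aP s).2].
Qed.

End Continuity.

End GermMap.

Lemma germ_map_over_cancel
    (S : Type) (mulS : S -> S -> S) (starS : S -> S)
    (X : topologicalType) (Xd : S -> set X) (th : S -> X -> X)
    (T : Type) (mulT : T -> T -> T) (starT : T -> T)
    (Y : topologicalType) (Yd : T -> set Y) (ga : T -> Y -> Y)
    (Phi : set (S * X) -> set (T * Y)) (Psi : set (T * Y) -> set (S * X))
    (phi : X -> Y) (psi : Y -> X) :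
  inverse_semigroup mulS starS -> top_partial_action mulS starS Xd th ->
  germ_map_over mulS starS Xd th mulT starT Yd ga Phi phi ->
  germ_map_over mulT starT Yd ga mulS starS Xd th Psi psi ->
  (forall g, germs mulS starS Xd g -> Psi (Phi g) = g) ->
  cancel phi psi.
Proof.
move=> iS tS phi_over psi_over PsiK x.
have [e [_ xe]] := pa_cover iS tS x.
have [t [xt E _]] := phi_over _ _ xe.
have [s [_ E' _]] := psi_over _ _ xt.
have := PsiK _ (germs_germ xe); rewrite E E' => /esym.
by move/(germ_eq_src iS xe).
Qed.

Theorem theorem8p9
  (S : Type) (mulS : S -> S -> S) (starS : S -> S)
  (T : Type) (mulT : T -> T -> T) (starT : T -> T)
  (X Y : topologicalType)
  (Xd : S -> set X) (th : S -> X -> X)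
  (Yd : T -> set Y) (ga : T -> Y -> Y) :
  inverse_semigroup mulS starS ->
  inverse_semigroup mulT starT ->
  top_partial_action mulS starS Xd th ->
  top_partial_action mulT starT Yd ga ->
  almost_ample mulS starS Xd th ->
  almost_ample mulT starT Yd ga ->
  germ_groupoids_isomorphic mulS starS Xd th mulT starT Yd ga ->
  cont_orbit_equiv mulS starS Xd th mulT starT Yd ga.
Proof.
move=> iS iT tS tT [_ _ upX] [_ _ upY] [Phi [Psi
  [PhiG [PsiG [PsiK [PhiK [Phi_mul [Psi_mul [Phi_cont Psi_cont]]]]]]]]].
have [phi phi_over] := exists_germ_map_over iS iT tS tT PhiG Phi_mul.
have [psi psi_over] := exists_germ_map_over iT iS tT tS PsiG Psi_mul.
have [a [a_cont a_spec]] :=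
  exists_germ_map_over_cocycle iS iT tS tT Phi_cont phi_over upX.
have [b [b_cont b_spec]] :=
  exists_germ_map_over_cocycle iT iS tT tS Psi_cont psi_over upY.
exists phi, psi, a, b; split=> //.
- split; [exact: (germ_map_over_cancel iS tS phi_over psi_over PsiK)
         | exact: (germ_map_over_cancel iT tT psi_over phi_over PhiK)].
- split; [exact: (germ_map_over_continuous iS iT tS tT Phi_cont phi_over)
         | exact: (germ_map_over_continuous iT iS tT tS Psi_cont psi_over)].
Qed.
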